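(* Fix $n\ge 1$, $\Gamma\ge 1$, a score function $\varphi:(0,1)\to[0,\infty)$, and any threshold function $f:(0,1)\to\mathbb{R}_{>0}$. Consider all joint distributions of the treatment assignments allowed by the sensitivity null hypothesis $H_0(\Gamma)$. Among these, the conditional rejection probability $$\mathbb{P}\big(\exists x\in(0,1): T_n(x)\ge f(x)\,\big|\,\mathcal{F}\big)$$ is maximized by the distribution under which the signs are conditionally independent across pairs and $\mathbb{P}(Y_i>0\mid\mathcal{F})=\Gamma/(1+\Gamma)$ for every $i\in\{1,\dots,n\}$.
   Context: Paired observational study: there are $n$ pairs; in pair $i$, units $j=1,2$ have control potential outcome $R_{Cij}$, treated potential outcome $R_{Tij}$ and treatment indicator $Z_{ij}\in\{0,1\}$. Throughout, everything is conditional on the event that exactly one unit per pair is treated ($Z_{i1}+Z_{i2}=1$ for all $i$). $\mathcal{F}$ is the $\sigma$-field generated by all potential outcomes. Observed outcomes are $R^{obs}_{ij}=Z_{ij}R_{Tij}+(1-Z_{ij})R_{Cij}$, and $Y_i=(Z_{i1}-Z_{i2})(R^{obs}_{i1}-R^{obs}_{i2})$ is the treated-minus-control difference. Standing assumption: $\mathbb{P}(Y_i=0)=0$ for all $i$. For $\Gamma\ge1$, the sensitivity null $H_0(\Gamma)$ asserts: $R_{Tij}=R_{Cij}$ for all $i,j$; and conditional on $\mathcal{F}$, assignments are independent across pairs and for every $i$, $$\frac1\Gamma\le \frac{\mathbb{P}(Z_{i1}=1\mid\mathcal{F})/\mathbb{P}(Z_{i1}=0\mid\mathcal{F})}{\mathbb{P}(Z_{i2}=1\mid\mathcal{F})/\mathbb{P}(Z_{i2}=0\mid\mathcal{F})}\le\Gamma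 .$$ (Under $H_0(\Gamma)$, $Y_i=\pm|R_{Ci1}-R_{Ci2}|$ and $1/(1+\Gamma)\le\mathbb{P}(Y_i>0\mid\mathcal{F})\le\Gamma/(1+\Gamma)$.) Let $Y_{(1)},\dots,Y_{(n)}$ be the $Y_i$ ordered so that $|Y_{(1)}|\le\dots\le|Y_{(n)}|$. Set $c_i=\varphi(i/(n+1))$. Define $T_n(x)=0$ for $x<1/(n+1)$ and, for $x\ge 1/(n+1)$, $T_n(x)=\sum_{i=\lceil (1-x)(n+1)\rceil}^{n} c_i\,\mathbf{1}\{Y_{(i)}>0\}$. *)

From HB Require Import structures.
From mathcomp Require Import all_boot all_order all_algebra fingroup perm.
From mathcomp Require Import boolp reals.
Set Implicit Arguments. Unset Strict Implicit. Unset Printing Implicit Defensive.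
Import Order.TTheory GRing.Theory Num.Theory.
Local Open Scope ring_scope.

(* Conditionally on F, under H0(Gamma), Y_i = +/- d i with d i = |R_Ci1 - R_Ci2|.
   A sign configuration s : {ffun 'I_n -> bool} records s i = (Y_i > 0).
   sigma : {perm 'I_n} sorts the pairs so that |Y_(1)| <= ... <= |Y_(n)|:
   Y_(k+1) (1-indexed rank) is Y_(sigma k) (0-indexed). *)

(* c_k = phi (k / (n+1)) for the 1-indexed rank k; here k : 'I_n is rank k.+1 *)
Definition score_c (R : realType) (phi : R -> R) (n : nat) (k : 'I_n) : R :=
  phi ((k.+1)%:R / (n.+1)%:R).

Definition Tn (R : realType) (phi : R -> R) (n : nat) (sigma : {perm 'I_n})
    (s : {ffun 'I_n -> bool}) (x : R) : R :=
  if x < 1 / (n.+1)%:R then 0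
  else \sum_(k < n | Num.ceil ((1 - x) * (n.+1)%:R) <= (k.+1)%:Z)
         (if s (sigma k) then score_c phi k else 0).

Definition rejects (R : realType) (phi f : R -> R) (n : nat) (sigma : {perm 'I_n})
    (s : {ffun 'I_n -> bool}) : Prop :=
  exists x : R, 0 < x < 1 /\ f x <= Tn phi sigma s x.

Definition sign_prob (R : realType) (n : nat) (p : 'I_n -> R)
    (s : {ffun 'I_n -> bool}) : R :=
  \prod_(i < n) (if s i then p i else 1 - p i).

Definition rej_prob (R : realType) (phi f : R -> R) (n : nat) (sigma : {perm 'I_n})
    (p : 'I_n -> R) : R :=
  \sum_(s : {ffun 'I_n -> bool} | `[< rejects phi f sigma s >]) sign_prob p s.

(* the distributions of the signs allowed by H0(Gamma), conditionally on F:
   independent across pairs with 1/(1+Gamma) <= P(Y_i>0|F) <= Gamma/(1+Gamma) *)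
Definition H0_sign_law (R : realType) (Gamma : R) (n : nat) (p : 'I_n -> R) : Prop :=
  forall i, 1 / (1 + Gamma) <= p i <= Gamma / (1 + Gamma).

From HB Require Import structures.
From mathcomp Require Import all_boot all_order all_algebra fingroup perm.
From mathcomp Require Import boolp reals ring lra.
Import Order.TTheory GRing.Theory Num.Theory.
Local Open Scope ring_scope.
Set Implicit Arguments. Unset Strict Implicit.

(* Since the scores are nonnegative, turning a sign from negative to positive
   can only increase T_n(x), so rejection is an increasing event of the sign
   vector.  For independent signs the probability of an increasing event is
   nondecreasing in each P(Y_i > 0): pairing every configuration with the one
   where sign i is flipped, each pair contributes an affine function of p_i
   whose slope is nonnegative.  Raising the p_i one at a time to the top of the
   H0(Gamma) box Gamma/(1+Gamma) therefore never decreases the rejection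
   probability. *)

Section IncreasingEvents.
Variables (R : realType) (n : nat).
Local Notation signs := {ffun 'I_n -> bool}.
Implicit Types (p q : 'I_n -> R) (s t : signs) (P : pred signs).

Definition event_prob P p : R := \sum_(s | P s) sign_prob p s.

Definition increasing_event P := forall s t, P s -> (forall j, s j ==> t j) -> P t.

Definition flip_sign (i : 'I_n) s : signs :=
  [ffun j => if j == i then ~~ s j else s j].

Lemma flip_signK i : involutive (flip_sign i).
Proof.
by move=> s; apply/ffunP => j; rewrite !ffunE; case: eqP => // ->; rewrite negbK.
Qed.

Lemma flip_sign_at i s : flip_sign i s i = ~~ s i.
Proof. by rewrite ffunE eqxx. Qed.

Lemma flip_sign_off i s j : j != i -> flip_sign i s j = s j.
Proof. by rewrite ffunE => /negbTE ->. Qed.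

Definition sign_prob_off (i : 'I_n) p s : R :=
  \prod_(j | j != i) (if s j then p j else 1 - p j).

Lemma sign_probD1 i p s :
  sign_prob p s = (if s i then p i else 1 - p i) * sign_prob_off i p s.
Proof. exact: bigD1. Qed.

Lemma sign_prob_off_flip i p s : sign_prob_off i p (flip_sign i s) = sign_prob_off i p s.
Proof. by apply: eq_bigr => j /flip_sign_off ->. Qed.

Lemma event_prob_flip_pairs P p i :
  event_prob P p =
  \sum_(s : signs | s i) ((P s)%:R * p i + (P (flip_sign i s))%:R * (1 - p i))
                   * sign_prob_off i p s.
Proof.
rewrite /event_prob big_mkcond (bigID (fun s : signs => s i)) /=.
rewrite [X in _ + X](reindex_inj (can_inj (flip_signK i))) /=.
rewrite [X in _ + X](eq_bigl (fun s : signs => s i)) => [|s]; last first.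
  by rewrite flip_sign_at negbK.
rewrite -big_split; apply: eq_bigr => s si /=.
rewrite !(sign_probD1 i) sign_prob_off_flip flip_sign_at si /=.
by case: (P s); case: (P (flip_sign i s)) => /=; ring.
Qed.

Lemma le_event_prob_at P (i : 'I_n) p q :
  increasing_event P -> (forall j, 0 <= p j <= 1) ->
  (forall j, j != i -> p j = q j) -> p i <= q i ->
  event_prob P p <= event_prob P q.
Proof.
move=> incP p01 eq_pq le_pq.
rewrite !(event_prob_flip_pairs P _ i); apply: ler_sum => s si.
have -> : sign_prob_off i q s = sign_prob_off i p s.
  by apply: eq_bigr => j /eq_pq ->.
have off_ge0 : 0 <= sign_prob_off i p s.
  by apply: prodr_ge0 => j _; case: (s j); case/andP: (p01 j); lra.
apply: ler_wpM2r => //.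
have flipP : P (flip_sign i s) -> P s.
  move=> /incP; apply=> j; have [->|/flip_sign_off ->] := eqVneq j i.
    by rewrite si implybT.
  exact: implybb.
case: (P s) flipP => [_ | flipP].
  by case: (P (flip_sign i s)) => /=; lra.
by case: (P (flip_sign i s)) flipP => [/(_ isT)//|_] /=; lra.
Qed.

Lemma le_event_prob P p q :
  increasing_event P -> (forall j, 0 <= p j <= 1) -> (forall j, 0 <= q j <= 1) ->
  (forall j, p j <= q j) -> event_prob P p <= event_prob P q.
Proof.
move=> incP p01 q01 le_pq.
pose mix k (j : 'I_n) := if (j < k)%N then q j else p j.
have mix01 k j : 0 <= mix k j <= 1 by rewrite /mix; case: ifP.
have mix_le k : event_prob P p <= event_prob P (mix k).
  elim: k => [|k IHk]; first by have -> : mix 0%N = p by apply/funext.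
  apply: (le_trans IHk); have [kn|nk] := ltnP k n.
    apply: (@le_event_prob_at P (Ordinal kn)) => // [j|]; last first.
      by rewrite /mix ltnn ltnSn.
    by rewrite /mix ltnS [(j <= k)%N]leq_eqVlt -val_eqE /= => /negbTE ->.
  have -> // : mix k.+1 = mix k.
  by apply/funext => j; rewrite /mix !(leq_trans (ltn_ord j)) ?(leqW nk).
by have <- : mix n = q by apply/funext => j; rewrite /mix ltn_ord.
Qed.

End IncreasingEvents.

Lemma score_c_ge0 (R : realType) (phi : R -> R) n (k : 'I_n) :
  (forall x, 0 < x < 1 -> 0 <= phi x) -> 0 <= score_c phi k.
Proof.
move=> phi_ge0; apply: phi_ge0; rewrite divr_gt0 ?ltr0n //=.
by rewrite ltr_pdivrMr ?ltr0n // mul1r ltr_nat ltnS.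
Qed.

Lemma le_Tn (R : realType) (phi : R -> R) n (sigma : {perm 'I_n})
    (s t : {ffun 'I_n -> bool}) (x : R) :
  (forall k : 'I_n, 0 <= score_c phi k) -> (forall j, s j ==> t j) ->
  Tn phi sigma s x <= Tn phi sigma t x.
Proof.
move=> c_ge0 le_st; rewrite /Tn; case: ifP => // _.
apply: ler_sum => k _; move: (le_st (sigma k)).
by case: (s _); case: (t _) => //= _; exact: c_ge0.
Qed.

Lemma rejects_increasing (R : realType) (phi f : R -> R) n (sigma : {perm 'I_n}) :
  (forall k : 'I_n, 0 <= score_c phi k) ->
  increasing_event (fun s => `[< rejects phi f sigma s >]).
Proof.
move=> c_ge0 s t /asboolP[x [x01 rej]] le_st; apply/asboolP.
by exists x; split => //; apply: le_trans rej (le_Tn _ _ c_ge0 le_st).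
Qed.

Lemma H0_sign_law_top (R : realType) (Gamma : R) n :
  1 <= Gamma -> H0_sign_law Gamma (fun _ : 'I_n => Gamma / (1 + Gamma)).
Proof.
by move=> G1 i; rewrite lexx andbT ler_wpM2r // invr_ge0; lra.
Qed.

Lemma H0_sign_law_01 (R : realType) (Gamma : R) n (p : 'I_n -> R) :
  0 <= Gamma -> H0_sign_law Gamma p -> forall i, 0 <= p i <= 1.
Proof.
move=> G0 H0p i; case/andP: (H0p i) => lo hi; apply/andP; split.
  by apply: le_trans lo; rewrite divr_ge0 //; lra.
by apply: le_trans hi _; rewrite ler_pdivrMr; lra.
Qed.

Theorem proposition1 (R : realType) (n : nat) (Gamma : R) (phi f : R -> R)
    (d : 'I_n -> R) (sigma : {perm 'I_n}) :
  (1 <= n)%N -> 1 <= Gamma ->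
  (forall x, 0 < x < 1 -> 0 <= phi x) ->
  (forall x, 0 < x < 1 -> 0 < f x) ->
  (forall i, 0 < d i) ->
  (forall k l : 'I_n, (k <= l)%N -> d (sigma k) <= d (sigma l)) ->
  H0_sign_law Gamma (fun _ : 'I_n => Gamma / (1 + Gamma)) /\
  forall p : 'I_n -> R, H0_sign_law Gamma p ->
    rej_prob phi f sigma p <= rej_prob phi f sigma (fun _ : 'I_n => Gamma / (1 + Gamma)).
Proof.
move=> _ G1 phi_ge0 _ _ _.
have top := @H0_sign_law_top R Gamma n G1.
split=> // p H0p.
have G0 : 0 <= Gamma by lra.
apply: le_event_prob.
- by apply: rejects_increasing => k; apply: score_c_ge0.
- exact: H0_sign_law_01 H0p.
- exact: H0_sign_law_01 top.
- by move=> i; case/andP: (H0p i).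
Qed.
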